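(* Let $(\alpha_0,\beta_0)\in\Delta_K$, $(\alpha_n,\beta_n)=T^n(\alpha_0,\beta_0)$, $\varepsilon_n=\varepsilon(\alpha_n,\beta_n)$, and assume that there exist $m\ge0$ and $p\ge1$ with $(\alpha_m,\beta_m,\varepsilon_m)=(\alpha_{m+p},\beta_{m+p},\varepsilon_{m+p})$. Then, regarding a stepped surface as the (infinite) formal sum of its unit squares and extending the dual substitutions additively to such infinite sums, \[ \mathscr S(\bar{\bar\nu}(\alpha_0,\beta_0))=\Theta_{\varepsilon_0}\circ\Theta_{\varepsilon_1}\circ\cdots\circ\Theta_{\varepsilon_{m-1}}\big(\mathscr S(\bar{\bar\nu}(\alpha_m,\beta_m))\big), \] and $\mathscr S(\bar{\bar\nu}(\alpha_m,\beta_m))$ is a fixed point of $\Theta=\Theta_{\varepsilon_m}\Theta_{\varepsilon_{m+1}}\cdots\Theta_{\varepsilon_{m+p-1}}$: \[ \Theta\big(\mathscr S(\bar{\bar\nu}(\alpha_m,\beta_m))\big)=\mathscr S(\bar{\bar\nu}(\alpha_m,\beta_m)). \]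
   Context: Let $K\subset\mathbb{R}$ be a real cubic number field, $N=N_{K/\mathbb{Q}}$ its norm. Fix $r=p/q$ with $p,q$ positive coprime integers and $3\nmid p$. Let $\Delta_K=\{(\alpha,\beta)\in K^2:\ 1,\alpha,\beta \text{ linearly independent over }\mathbb{Q},\ \alpha,\beta>0,\ \alpha+\beta<1\}$ and $Ind=\{(i,j): i,j\in\{0,1,2\},\ i\neq j\}$. Let $\Delta=\{(x,y)\in\mathbb{R}^2: x,y\ge 0,\ x+y\le 1\}$ and $\triangle(1,2)=\{(x,y)\in\Delta: x\ge y\}$, $\triangle(2,1)=\{x\le y\}$, $\triangle(0,1)=\{2x+y-1\le 0\}$, $\triangle(1,0)=\{2x+y-1\ge 0\}$, $\triangle(0,2)=\{x+2y-1\le0\}$, $\triangle(2,0)=\{x+2y-1\ge 0\}$ (all subsets of $\Delta$). Maps $T_{(i,j)}:\triangle(i,j)\to\Delta$: $T_{(1,2)}(x,y)=(\frac{x-y}{1-y},\frac{y}{1-y})$, $T_{(2,1)}(x,y)=(\frac{x}{1-x},\frac{y-x}{1-x})$, $T_{(0,1)}(x,y)=(\frac{x}{1-x},\frac{y}{1-x})$, $T_{(1,0)}(x,y)=(\frac{2x+y-1}{x+y},\frac{y}{x+y})$, $T_{(0,2)}(x,y)=(\frac{x}{1-y},\frac{y}{1-y})$, $T_{(2,0)}(x,y)=(\frac{x}{x+y},\frac{x+2y-1}{x+y})$. For $(\alpha,\beta)\in\Delta_K$ put $\gamma=1-\alpha-\beta$ and $v_{\{1,2\}}=\frac{\alpha^r\beta^r}{|N(\alpha)N(\beta)|}$,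 $v_{\{0,1\}}=\frac{\alpha^r\gamma^r}{|N(\alpha)N(\gamma)|}$, $v_{\{0,2\}}=\frac{\beta^r\gamma^r}{|N(\beta)N(\gamma)|}$; the maximum is attained at a unique pair $\{i_0,j_0\}$. $\varepsilon(\alpha,\beta)$ is the ordered pair $(i,j)\in Ind$ with $\{i,j\}=\{i_0,j_0\}$ and $(\alpha,\beta)\in\triangle(i,j)$, and $T(\alpha,\beta)=T_{\varepsilon(\alpha,\beta)}(\alpha,\beta)$ (a map $\Delta_K\to\Delta_K$). For $(i,j)\in Ind$, $M_{(i,j)}=(m_{k\ell})_{0\le k,\ell\le2}$ with $m_{k\ell}=1$ if $k=\ell$ or $(k,\ell)=(i,j)$, and $0$ otherwise; $L_{(i,j)}:=M_{(j,i)}$. For $(\alpha,\beta)\in\Delta_K$, $\bar{\bar\nu}(\alpha,\beta)={}^t(1-\alpha-\beta,\alpha,\beta)$. Let $\bar{\bar e}_0,\bar{\bar e}_1,\bar{\bar e}_2$ be the standard basis of $\mathbb{R}^3$. A unit square $(\bar{\bar x},i^* )$ ($\bar{\bar x}\in\mathbb{Z}^3$, $i\in\{0,1,2\}$) is the set $\{\bar{\bar x}+t\bar{\bar e}_j+u\bar{\bar e}_k: t,u\in[0,1]\}$ with $\{i,j,k\}=\{0,1,2\}$. For $\bar{\bar a}\in\mathbb{R}^3_{>0}$ with $\mathbb{Q}$-linearly independent coordinates, the stepped surface is $\mathscr S(\bar{\bar a})=\{(\bar{\bar x},i^* ): \bar{\bar x}\in\mathbb{Z}^3, i\in\{0,1,2\},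 \langle\bar{\bar x},\bar{\bar a}\rangle>0,\ \langle\bar{\bar x}-\bar{\bar e}_i,\bar{\bar a}\rangle\le0\}$. For $(i,j)\in Ind$ the dual substitution $\Theta_{(i,j)}$ is defined on unit squares by $\Theta_{(i,j)}(\bar{\bar x},j^* )=(L_{(i,j)}^{-1}(\bar{\bar x}+\bar{\bar e}_i),i^* )+(L_{(i,j)}^{-1}\bar{\bar x},j^* )$ and $\Theta_{(i,j)}(\bar{\bar x},k^* )=(L_{(i,j)}^{-1}\bar{\bar x},k^* )$ for $k\neq j$, and extended additively to formal sums. *)

From HB Require Import structures.
From mathcomp Require Import all_boot all_order all_algebra all_field.
From mathcomp Require Import all_classical all_reals all_analysis.
Set Implicit Arguments. Unset Strict Implicit. Unset Printing Implicit Defensive.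
Import Order.TTheory GRing.Theory Num.Theory.
Local Open Scope ring_scope.
Local Open Scope classical_set_scope.

Definition ix0 : 'I_3 := @Ordinal 3 0 isT.
Definition ix1 : 'I_3 := @Ordinal 3 1 isT.
Definition ix2 : 'I_3 := @Ordinal 3 2 isT.

Definition normK (K : fieldExtType rat) (x : K) : rat :=
  \det (passmx.mxof (vbasis fullv) (vbasis fullv) (amull x)).

Section Dynamics.
Variables (R : realType) (K : fieldExtType rat) (sigma : {rmorphism K -> R}) (r : R).

Definition DeltaK (a b : K) : Prop :=
  free [:: 1; a; b] /\ 0 < sigma a /\ 0 < sigma b /\ sigma a + sigma b < 1.

Definition inDelta (x y : R) : bool := (0 <= x) && (0 <= y) && (x + y <= 1).
Definition tri (i j : 'I_3) (x y : R) : bool :=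
  inDelta x y &&
  match val i, val j with
  | 1, 2 => y <= x
  | 2, 1 => x <= y
  | 0, 1 => 2 * x + y - 1 <= 0
  | 1, 0 => 2 * x + y - 1 >= 0
  | 0, 2 => x + 2 * y - 1 <= 0
  | 2, 0 => x + 2 * y - 1 >= 0
  | _, _ => false
  end.

Definition Tij (i j : 'I_3) (x y : K) : K * K :=
  match val i, val j with
  | 1, 2 => ((x - y) / (1 - y), y / (1 - y))
  | 2, 1 => (x / (1 - x), (y - x) / (1 - x))
  | 0, 1 => (x / (1 - x), y / (1 - x))
  | 1, 0 => ((2 * x + y - 1) / (x + y), y / (x + y))
  | 0, 2 => (x / (1 - y), y / (1 - y))
  | 2, 0 => (x / (x + y), (x + 2 * y - 1) / (x + y))
  | _, _ => (x, y)
  end.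

Definition vv (u w : K) : R :=
  powR (sigma u) r * powR (sigma w) r / `| ratr (normK u * normK w) |.

(* epsilon(alpha,beta); the paper asserts the max is unique and that exactly one
   of the two ordered triangles contains (alpha,beta) on Delta_K; the fall-back
   branches below only matter in (non-occurring) ties *)
Definition eps (a b : K) : 'I_3 * 'I_3 :=
  let g := 1 - a - b in
  let v12 := vv a b in let v01 := vv a g in let v02 := vv b g in
  if (v01 < v12) && (v02 < v12) then
    (if tri ix1 ix2 (sigma a) (sigma b) then (ix1, ix2) else (ix2, ix1))
  else if v02 < v01 then
    (if tri ix0 ix1 (sigma a) (sigma b) then (ix0, ix1) else (ix1, ix0))
  else
    (if tri ix0 ix2 (sigma a) (sigma b) then (ix0, ix2) else (ix2, ix0)).

Definition Tmap (ab : K * K) : K * K :=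
  let e := eps ab.1 ab.2 in Tij e.1 e.2 ab.1 ab.2.

Definition Torbit (ab0 : K * K) (n : nat) : K * K := iter n Tmap ab0.
Definition epsn (ab0 : K * K) (n : nat) : 'I_3 * 'I_3 :=
  eps (Torbit ab0 n).1 (Torbit ab0 n).2.

Definition nu (ab : K * K) : 'cV[R]_3 :=
  \col_k (if val k == 0%N then 1 - sigma ab.1 - sigma ab.2
          else if val k == 1%N then sigma ab.1 else sigma ab.2).

End Dynamics.

Definition Square := ('cV[int]_3 * 'I_3)%type.

Definition evec (i : 'I_3) : 'cV[int]_3 := delta_mx i 0.

Definition Mmx (i j : 'I_3) : 'M[int]_3 :=
  \matrix_(k, l) ((k == l) || ((k == i) && (l == j)))%:R.
Definition Lmx (i j : 'I_3) : 'M[int]_3 := Mmx j i.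

Definition dotZR (R : realType) (x : 'cV[int]_3) (a : 'cV[R]_3) : R :=
  \sum_(k < 3) (x k 0)%:~R * a k 0.

Definition stepped (R : realType) (a : 'cV[R]_3) : set Square :=
  [set s | 0 < dotZR s.1 a /\ dotZR (s.1 - evec s.2) a <= 0].

(* Theta_(i,j) on a single unit square: a finite formal sum (list) of squares *)
Definition theta1 (e : 'I_3 * 'I_3) (s : Square) : seq Square :=
  let Li := invmx (Lmx e.1 e.2) in
  if s.2 == e.2 then [:: (Li *m (s.1 + evec e.1), e.1); (Li *m s.1, e.2)]
  else [:: (Li *m s.1, s.2)].

(* (possibly infinite) formal sums of unit squares, with multiplicities in \bar R *)
Definition fsum (R : realType) := Square -> \bar R.

Definition fsum_of (R : realType) (S : set Square) : fsum R :=
  fun s => ((\1_S s : R))%:E.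

Definition Theta (R : realType) (e : 'I_3 * 'I_3) (F : fsum R) : fsum R :=
  fun y => \esum_(s in [set: Square]) (F s * ((count_mem y (theta1 e s))%:R)%:E)%E.

Definition ThetaComp (R : realType) (es : seq ('I_3 * 'I_3)) (F : fsum R) : fsum R :=
  foldr (@Theta R) F es.

From HB Require Import structures.
From mathcomp Require Import all_boot all_order all_algebra all_field.
From mathcomp Require Import all_classical all_reals all_analysis.
From mathcomp Require Import ring lra.
Set Implicit Arguments. Unset Strict Implicit. Unset Printing Implicit Defensive.
Import Order.TTheory GRing.Theory Num.Theory.
Local Open Scope ring_scope.

(* If a = c tL a' with c > 0, a' >= 0 and L = L_(i,j), then <L x, a'> = <x, a> / c, so the
   dual substitution Theta_(i,j) sends the unit squares of S(a') onto those of S(a), each hit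
   once: an (i^* )-square (x, i^* ) of S(a) has the two preimages (L x, i^* ) and
   (L x - e_i, j^* ), and the position of <L x, a'> relative to a'_i decides which of them
   lies in S(a'). On triangle(i,j) one has nu(alpha, beta) = c tL_(i,j) nu(T_(i,j)(alpha, beta))
   with c > 0, and T keeps nu nonnegative, so Theta_(eps_n) S(nu_(n+1)) = S(nu_n) along the
   whole orbit. Composing these identities gives the first equality, and T^(m+p) = T^m at
   (alpha_0, beta_0) turns the composition from m to m+p into a fixed-point equation. *)

Lemma LmxE (i j : 'I_3) : i != j -> Lmx i j = 1%:M + delta_mx j i.
Proof.
move=> ij; apply/matrixP => k l; rewrite /Lmx /Mmx !mxE.
case: (eqVneq k l) => [<-|_] /=; last by rewrite add0r.
case: (eqVneq k j) => [->|_] /=; last by rewrite addr0.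
by rewrite eq_sym (negbTE ij) addr0.
Qed.

Lemma Lmx_unitmx (i j : 'I_3) : i != j -> Lmx i j \in unitmx.
Proof.
move=> ij; have LK : Lmx i j *m (1%:M - delta_mx j i) = 1%:M.
  rewrite LmxE // mulmxDl mulmxBr mulmxBr !mul1mx mulmx1 mul_delta_mx_cond.
  by rewrite (negbTE ij) mulr0n subr0 subrK.
by case: (mulmx1_unit LK).
Qed.

Lemma mul_Lmx (i j : 'I_3) (w : 'cV[int]_3) : i != j ->
  Lmx i j *m w = w + w i 0 *: evec j.
Proof.
move=> ij; rewrite LmxE // mulmxDl mul1mx; congr (_ + _).
apply/matrixP => k l; rewrite !mxE (bigD1 i) //= big1 => [|m /negbTE mi].
  rewrite !mxE eqxx andbT (ord1 l).
  by case: (k == j); rewrite /= ?mulr1 ?mul1r ?mulr0 ?mul0r ?addr0.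
by rewrite mxE mi andbF mul0r.
Qed.

Lemma invmx_Lmx_eq (i j : 'I_3) (w u : 'cV[int]_3) : i != j ->
  (invmx (Lmx i j) *m u == w) = (u == Lmx i j *m w).
Proof.
move=> /Lmx_unitmx U; apply/eqP/eqP => [<-|->]; first by rewrite mulKVmx.
by rewrite mulKmx.
Qed.

Lemma evec_neq0 (i : 'I_3) : evec i != 0.
Proof.
apply/negP => /eqP/matrixP/(_ i 0)/eqP; rewrite /evec !mxE !eqxx /=.
by rewrite oner_eq0.
Qed.

Lemma count_theta1 (i j : 'I_3) (w : 'cV[int]_3) (k : 'I_3) (s : Square) : i != j ->
  count_mem (w, k) (theta1 (i, j) s) =
  ((s == (Lmx i j *m w, k)) + ((k == i) && (s == ((Lmx i j *m w - evec i)%R, j))))%N.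
Proof.
move=> ij; case: s => v t; rewrite /theta1 /= !xpair_eqE.
have -> : (v == Lmx i j *m w - evec i) = (v + evec i == Lmx i j *m w).
  by rewrite eq_sym subr_eq eq_sym.
have : ~~ ((v == Lmx i j *m w) && (v + evec i == Lmx i j *m w)).
  apply/negP => /andP[/eqP ->].
  by rewrite -subr_eq0 addrC addKr (negbTE (evec_neq0 i)).
case: (eqVneq t j) => [->|tj] /=; rewrite !xpair_eqE !invmx_Lmx_eq // ?andbT ?andbF ?addn0.
  by case: (v == _); case: (v + _ == _); rewrite //= ?andbF ?andbT ?addn0 ?add0n ?(eq_sym i k).
all: by rewrite ?(eq_sym i k).
Qed.

Lemma esum_single (R : realType) (T : choiceType) (g : T -> \bar R) (t : T) :
  (forall s, (0 <= g s)%E) -> (forall s, s != t -> g s = 0%E) ->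
  \esum_(s in [set: T]) g s = g t.
Proof.
move=> g0 gt; rewrite (esumID [set t]); last by move=> s _; exact: g0.
rewrite setTI esum_set1 // esum1 ?adde0 // => s [_ /= st].
by apply: gt; apply/eqP.
Qed.

Section DualSubstitution.
Variable R : realType.
Implicit Types (a : 'cV[R]_3) (w x y : 'cV[int]_3).

Lemma dotZRD x y a : dotZR (x + y) a = dotZR x a + dotZR y a.
Proof.
rewrite /dotZR -big_split /=; apply: eq_bigr => k _.
by rewrite mxE intrD mulrDl.
Qed.

Lemma dotZRB x y a : dotZR (x - y) a = dotZR x a - dotZR y a.
Proof.
rewrite /dotZR -sumrB; apply: eq_bigr => k _.
by rewrite !mxE intrB mulrBl.
Qed.

Lemma dotZRZ (z : int) x a : dotZR (z *: x) a = z%:~R * dotZR x a.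
Proof.
rewrite /dotZR mulr_sumr; apply: eq_bigr => k _.
by rewrite mxE intrM mulrA.
Qed.

Lemma dotZR_evec (k : 'I_3) a : dotZR (evec k) a = a k 0.
Proof.
rewrite /dotZR (bigD1 k) //= big1 => [|l /negbTE lk]; last first.
  by rewrite /evec mxE lk mul0r.
by rewrite /evec mxE !eqxx mul1r addr0.
Qed.

(* [a = c * tL_(i,j) a'] coordinatewise: tL_(i,j) = tM_(j,i) adds the j-th coordinate to the i-th. *)
Definition tL_scaled (i j : 'I_3) (c : R) (a a' : 'cV[R]_3) : Prop :=
  forall k, a k 0 = c * (a' k 0 + (k == i)%:R * a' j 0).

Lemma dotZR_tL_scaled (i j : 'I_3) (c : R) (a a' : 'cV[R]_3) w : i != j -> tL_scaled i j c a a' ->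
  dotZR w a = c * dotZR (Lmx i j *m w) a'.
Proof.
move=> ij ha; rewrite mul_Lmx // dotZRD dotZRZ dotZR_evec.
have -> : (w i 0)%:~R * a' j 0 = \sum_(k < 3) (w k 0)%:~R * ((k == i)%:R * a' j 0).
  rewrite (bigD1 i) //= big1 => [|k /negbTE ->]; last by rewrite mul0r mulr0.
  by rewrite eqxx mul1r addr0.
by rewrite /dotZR -big_split mulr_sumr; apply: eq_bigr => k _ /=; rewrite ha; ring.
Qed.

Lemma tL_scaled_ge0 (i j : 'I_3) (c : R) (a a' : 'cV[R]_3) : i != j -> 0 < c -> tL_scaled i j c a a' ->
  (forall k, 0 <= a k 0) -> a j 0 <= a i 0 -> forall k, 0 <= a' k 0.
Proof.
move=> ij c0 ha a0 aji k; rewrite -(pmulr_rge0 _ c0).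
have := ha j; rewrite eq_sym (negbTE ij) mul0r addr0 => hj.
case: (eqVneq k i) => [->|ki].
  have := ha i; rewrite eqxx mul1r => hi.
  have -> : c * a' i 0 = a i 0 - a j 0 by rewrite hi hj; ring.
  by rewrite subr_ge0.
by have := ha k; rewrite (negbTE ki) mul0r addr0 => <-.
Qed.

Lemma in_stepped a (s : Square) :
  (s \in stepped a) = (0 < dotZR s.1 a) && (dotZR (s.1 - evec s.2) a <= 0).
Proof.
by apply/idP/andP => [/set_mem [] | [h1 h2]] //; apply/mem_set.
Qed.

(* Exactly one of the two preimages of an (i^* )-square of S(a) lies in S(a'). *)
Lemma indic_stepped_tL (i j : 'I_3) (c : R) (a a' : 'cV[R]_3) w (k : 'I_3) :
  i != j -> 0 < c -> (forall l, 0 <= a' l 0) -> tL_scaled i j c a a' ->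
  \1_(stepped a) (w, k) = \1_(stepped a') (Lmx i j *m w, k)
     + (k == i)%:R * \1_(stepped a') (Lmx i j *m w - evec i, j) :> R.
Proof.
move=> ij c0 a'0 ha; rewrite !indicE !in_stepped /=.
set p := dotZR (Lmx i j *m w) a'.
rewrite !dotZRB (dotZR_tL_scaled w ij ha) !dotZR_evec -/p ha.
rewrite pmulr_rgt0 // -mulrBr pmulr_rle0 //.
case: (eqVneq k i) => [->|ki] /=; last by rewrite !mul0r !addr0.
rewrite !mul1r; have := a'0 i; have := a'0 j.
have [pi|pi] := lerP p (a' i 0) => aj ai.
- have -> : (0 < p - a' i 0) = false by apply/negbTE; rewrite -leNgt; lra.
  have -> : (p - a' i 0 <= 0) = true by apply/idP; lra.
  have -> : (p - (a' i 0 + a' j 0) <= 0) = true by apply/idP; lra.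
  by rewrite addr0.
- have -> : (p - a' i 0 <= 0) = false by apply/negbTE; rewrite -ltNge; lra.
  have -> : (0 < p) = true by apply/idP; lra.
  have -> : (0 < p - a' i 0) = true by apply/idP; lra.
  by rewrite add0r opprD addrA.
Qed.

Lemma Theta_stepped (i j : 'I_3) (c : R) (a a' : 'cV[R]_3) :
  i != j -> 0 < c -> (forall k, 0 <= a' k 0) -> tL_scaled i j c a a' ->
  Theta (i, j) (fsum_of R (stepped a')) = fsum_of R (stepped a).
Proof.
move=> ij c0 a'0 ha; apply: funext => -[w k]; rewrite /Theta /fsum_of.
have indic_ge0 (S : set Square) s (n : nat) : (0 <= ((\1_S s : R) * n%:R)%:E)%E.
  by rewrite lee_fin mulr_ge0 // indicE.
under eq_esum do rewrite count_theta1 // -EFinM natrD mulrDr EFinD.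
rewrite esumD => [|s _|s _]; rewrite ?indic_ge0 //.
rewrite (esum_single (t := (Lmx i j *m w, k))) => [|//|s /negbTE ->]; last by rewrite mulr0.
rewrite (esum_single (t := (Lmx i j *m w - evec i, j))) => [|//|s /negbTE ->]; last first.
  by rewrite andbF mulr0.
by rewrite !eqxx andbT mulr1 -EFinD (indic_stepped_tL w k ij c0 a'0 ha) mulrC.
Qed.

End DualSubstitution.

Section Dynamics.
Variables (R : realType) (K : fieldExtType rat) (sigma : {rmorphism K -> R}) (r : R).

Definition nu_ge0 (ab : K * K) : Prop := forall k, 0 <= nu sigma ab k 0.

(* On triangle(i,j), each of the six maps T_(i,j) is the projective action of tL_(i,j)^-1. *)
Lemma tri_tL_scaled (e : 'I_3 * 'I_3) (a b : K) : tri e.1 e.2 (sigma a) (sigma b) ->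
  [/\ e.1 != e.2, nu sigma (a, b) e.2 0 <= nu sigma (a, b) e.1 0 &
      exists2 c, 0 < c & tL_scaled e.1 e.2 c (nu sigma (a, b)) (nu sigma (Tij e.1 e.2 a b))].
Proof.
set x := sigma a; set y := sigma b.
case: e => [[[|[|[|i]]] pi] [[|[|[|j]]] pj]] //=.
all: rewrite /tri /inDelta /= => /andP[/andP[/andP[x0 y0] xy1] ht] //.
all: split => //; first by rewrite !mxE /=; lra.
all: rewrite /Tij /=.
1: exists (1 - x); first lra.
2: exists (1 - y); first lra.
3: exists (x + y); first lra.
4: exists (1 - y); first lra.
5: exists (x + y); first lra.
6: exists (1 - x); first lra.
all: move=> [[|[|[|k]]] pk] //; rewrite !mxE /=.
all: rewrite ?(fmorphV, rmorphB, rmorphD, rmorphM, rmorph1, rmorph_nat) -/x -/y.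
all: field; apply/negP => /eqP; lra.
Qed.

Lemma eps_tri (a b : K) : inDelta (sigma a) (sigma b) ->
  tri (eps sigma r a b).1 (eps sigma r a b).2 (sigma a) (sigma b).
Proof.
rewrite /eps => h.
case: ifP => _; [|case: ifP => _]; case: ifP => //;
  rewrite /tri h /= => /negbT; rewrite -ltNge => ?; lra.
Qed.

Lemma nu_ge0_inDelta (ab : K * K) : nu_ge0 ab -> inDelta (sigma ab.1) (sigma ab.2).
Proof.
move=> h; have := h ix0; have := h ix1; have := h ix2; rewrite !mxE /= => h2 h1 h0.
by rewrite /inDelta h1 h2 /=; lra.
Qed.

Lemma DeltaK_nu_ge0 (a b : K) : DeltaK sigma a b -> nu_ge0 (a, b).
Proof. by case=> _ [a0 [b0 ab1]] [[|[|[|?]]] ?] //; rewrite mxE /=; lra. Qed.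

Lemma Tmap_tL_scaled (ab : K * K) : nu_ge0 ab ->
  let e := eps sigma r ab.1 ab.2 in
  [/\ e.1 != e.2, nu sigma ab e.2 0 <= nu sigma ab e.1 0 &
      exists2 c, 0 < c & tL_scaled e.1 e.2 c (nu sigma ab) (nu sigma (Tmap sigma r ab))].
Proof. by case: ab => a b /nu_ge0_inDelta/eps_tri/tri_tL_scaled. Qed.

Lemma Tmap_nu_ge0 (ab : K * K) : nu_ge0 ab -> nu_ge0 (Tmap sigma r ab).
Proof.
move=> h; have [ij le [c c0 hc]] := Tmap_tL_scaled h.
exact: tL_scaled_ge0 ij c0 hc h le.
Qed.

Lemma Theta_eps_stepped (ab : K * K) : nu_ge0 ab ->
  Theta (eps sigma r ab.1 ab.2) (fsum_of R (stepped (nu sigma (Tmap sigma r ab))))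
  = fsum_of R (stepped (nu sigma ab)).
Proof.
move=> h; have [ij _ [c c0 hc]] := Tmap_tL_scaled h; have := Tmap_nu_ge0 h.
move: ij hc; case: (eps _ _ _ _) => i j /= ij hc T0.
exact: Theta_stepped ij c0 T0 hc.
Qed.

Lemma TorbitS (ab0 : K * K) n : Torbit sigma r ab0 n.+1 = Tmap sigma r (Torbit sigma r ab0 n).
Proof. exact: iterS. Qed.

Lemma Torbit_nu_ge0 (ab0 : K * K) n : nu_ge0 ab0 -> nu_ge0 (Torbit sigma r ab0 n).
Proof. by move=> h; elim: n => [|n IH] //; rewrite TorbitS; exact: Tmap_nu_ge0. Qed.

Lemma ThetaComp_orbit (ab0 : K * K) s l : nu_ge0 ab0 ->
  ThetaComp [seq epsn sigma r ab0 n | n <- iota s l]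
    (fsum_of R (stepped (nu sigma (Torbit sigma r ab0 (s + l)))))
  = fsum_of R (stepped (nu sigma (Torbit sigma r ab0 s))).
Proof.
move=> h; elim: l s => [|l IH] s; first by rewrite addn0.
rewrite /= -addSnnS /ThetaComp /= -/(ThetaComp _ _) IH TorbitS.
exact: Theta_eps_stepped (Torbit_nu_ge0 s h).
Qed.

End Dynamics.

Unset Implicit Arguments.

Theorem corollary5p6 (R : realType) (K : fieldExtType rat)
  (sigma : {rmorphism K -> R}) (hK : \dim {:K} = 3%N)
  (pr qr : nat) (hpr : (0 < pr)%N) (hqr : (0 < qr)%N)
  (hcop : coprime pr qr) (h3 : ~~ (3 %| pr)%N)
  (a0 b0 : K) (h0 : DeltaK sigma a0 b0)
  (m k : nat) (hk : (1 <= k)%N)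
  (hper : Torbit sigma (pr%:R / qr%:R) (a0, b0) m
            = Torbit sigma (pr%:R / qr%:R) (a0, b0) (m + k)
          /\ epsn sigma (pr%:R / qr%:R) (a0, b0) m
            = epsn sigma (pr%:R / qr%:R) (a0, b0) (m + k)) :
  fsum_of R (stepped (nu sigma (a0, b0)))
    = ThetaComp [seq epsn sigma (pr%:R / qr%:R) (a0, b0) n | n <- iota 0 m]
        (fsum_of R (stepped (nu sigma (Torbit sigma (pr%:R / qr%:R) (a0, b0) m))))
  /\
  ThetaComp [seq epsn sigma (pr%:R / qr%:R) (a0, b0) n | n <- iota m k]
      (fsum_of R (stepped (nu sigma (Torbit sigma (pr%:R / qr%:R) (a0, b0) m))))
    = fsum_of R (stepped (nu sigma (Torbit sigma (pr%:R / qr%:R) (a0, b0) m))).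
Proof.
(* The arithmetic hypotheses only make eps well defined in the paper; here eps is total, and
   the periodicity of eps_n follows from that of the orbit. *)
have nu0 := DeltaK_nu_ge0 h0.
split; first by rewrite (ThetaComp_orbit (pr%:R / qr%:R) 0 m nu0).
by rewrite {1}(proj1 hper) ThetaComp_orbit.
Qed.
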